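(* Let $(X,\mathrm{dist})$ be a metric space, $\Sigma$ a metric space, and $\{U_\sigma(t,\tau)\}_{\sigma\in\Sigma}$ a family of processes on $X$. If $K_1,K_2\subset X$ are compact uniformly attracting sets for the family, then $K_1\cap K_2$ is a compact uniformly attracting set for the family.
   Context: A process on $X$ is a family of maps $U(t,\tau):X\to X$, indexed by reals $t\ge\tau$, with $U(\tau,\tau)=\mathrm{id}_X$ and $U(t,\tau)=U(t,s)U(s,\tau)$ for $t\ge s\ge\tau$; no continuity is assumed. For nonempty $B,C\subset X$, $\delta_X(B,C)=\sup_{x\in B}\inf_{\xi\in C}\mathrm{dist}(x,\xi)$. A set $K\subset X$ is uniformly attracting if for every bounded $C\subset X$, $\lim_{t-\tau\to\infty}\sup_{\sigma\in\Sigma}\delta_X(U_\sigma(t,\tau)C,K)=0$. *)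

From HB Require Import structures.
From mathcomp Require Import all_boot all_order all_algebra.
From mathcomp Require Import all_classical all_reals all_analysis.
Set Implicit Arguments. Unset Strict Implicit. Unset Printing Implicit Defensive.
Import Order.TTheory GRing.Theory Num.Theory.
Local Open Scope classical_set_scope.
Local Open Scope ring_scope.

Section Defs.
Context {R : realType} {X : metricType R}.

Definition is_process (U : R -> R -> X -> X) : Prop :=
  (forall tau : R, forall x, U tau tau x = x) /\
  (forall t s tau : R, tau <= s -> s <= t ->
     forall x, U t tau x = U t s (U s tau x)).

Definition hsemidist (B C : set X) : \bar R :=
  ereal_sup [set ereal_inf [set (mdist x xi)%:E | xi in C] | x in B].

Definition mbounded (C : set X) : Prop :=
  exists (x0 : X) (r : R), forall x, C x -> mdist x0 x <= r.

Definition uniformly_attracting {S : Type} (U : S -> R -> R -> X -> X)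
    (K : set X) : Prop :=
  forall C : set X, mbounded C ->
  forall eps : R, 0 < eps -> exists T : R,
    forall t tau : R, tau <= t -> T <= t - tau ->
    (ereal_sup [set hsemidist (U sigma t tau @` C) K | sigma in [set: S]]
      <= eps%:E)%E.

End Defs.

From HB Require Import structures.
From mathcomp Require Import all_boot all_order all_algebra.
From mathcomp Require Import all_classical all_reals all_analysis.
From mathcomp Require Import lra.
Import Order.TTheory GRing.Theory Num.Theory.
Local Open Scope classical_set_scope.
Local Open Scope ring_scope.

(* Near a compact set K1 and a closed set K2, points of K1 that are close to K2
   are close to K1 `&` K2 (a cluster point argument in K1).  Hence once an orbit
   is d-close both to K1 and to K2, it is eps-close to the intersection, for d
   depending only on eps: the attraction rates of K1 and K2 combine. *)

Section HausdorffSemidistance.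
Context {R : realType} {X : metricType R}.

Lemma hsemidist_le_lt {B K : set X} {e e' : R} {x : X} :
  (hsemidist B K <= e%:E)%E -> e < e' -> B x -> exists2 k, K k & mdist x k < e'.
Proof.
move=> BK ee' Bx.
have : (ereal_inf [set (mdist x k)%:E | k in K] < e'%:E)%E.
  apply: le_lt_trans (_ : e%:E < e'%:E)%E; last by rewrite lte_fin.
  by apply: le_trans BK; apply: ereal_sup_ubound; exists x.
by move=> /ereal_inf_lt [_ [k Kk <-]]; rewrite lte_fin; exists k.
Qed.

Lemma hsemidist_le (B K : set X) (e : R) :
  (forall x, B x -> exists2 k, K k & mdist x k <= e) -> (hsemidist B K <= e%:E)%E.
Proof.
move=> BK; apply: ge_ereal_sup => _ [x Bx <-].
have [k Kk xk] := BK x Bx.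
apply: le_trans (_ : (mdist x k)%:E <= e%:E)%E; last by rewrite lee_fin.
by apply: ereal_inf_lbound; exists k.
Qed.

Lemma near_setI {K1 K2 : set X} {e : R} : compact K1 -> closed K2 -> 0 < e ->
  exists2 d, 0 < d & forall a b, K1 a -> K2 b -> mdist a b < d ->
    exists2 k, (K1 `&` K2) k & mdist a k < e.
Proof.
move=> cK1 clK2 e0; apply: contrapT => no_d.
(* Otherwise the points of K1 that are e-far from K1 `&` K2 but d-close to K2
   generate a proper filter; a cluster point of it in K1 lies in the closed K2,
   yet is e-far from K1 `&` K2. *)
pose far a := K1 a /\ forall k, (K1 `&` K2) k -> e <= mdist a k.
pose Bs d := [set a | far a /\ exists2 b, K2 b & mdist a b < d].
have Bs_neq0 d : 0 < d -> Bs d !=set0.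
  move=> d0; apply: contrapT => Bs0; apply: no_d; exists d => // a b K1a K2b ab.
  apply: contrapT => no_k; apply: Bs0; exists a; split; last by exists b.
  split => // k Kk; rewrite leNgt; apply/negP => ak; apply: no_k; by exists k.
pose F := filter_from [set d : R | 0 < d] Bs.
have F_Bs d : 0 < d -> F (Bs d) by exists d.
have F_proper : ProperFilter F.
  apply: filter_from_proper => [|d /Bs_neq0//].
  apply: filter_from_filter; first by exists 1 => /=.
  move=> i j i0 j0; exists (Num.min i j); first by rewrite /= lt_min i0 j0.
  move=> a [fa [b K2b]]; rewrite lt_min => /andP[ai aj].
  by split; split => //; exists b.
have F_K1 : F K1 by exists 1 => //= a [[K1a _] _].
have [k [K1k clk]] := cK1 F F_proper F_K1.
have K2k : K2 k.
  apply: clK2 => B /nbhs_ballP [r /= r0 rB].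
  have r20 : 0 < r / 2 by rewrite divr_gt0.
  have [a [[_ [b K2b ab]] ka]] := clk _ _ (F_Bs _ r20) (nbhsx_ballx _ _ r20).
  exists b; split => //; apply: rB; move: ka; rewrite !ballEmdist /= => ka.
  by rewrite (le_lt_trans (metric_triangle _ a _))// [r]splitr ltrD.
have [a [[[_ far_a] _] ka]] := clk _ _ (F_Bs _ ltr01) (nbhsx_ballx _ _ e0).
move: ka; rewrite ballEmdist /= metric_sym => ka.
by have := far_a k (conj K1k K2k); rewrite leNgt ka.
Qed.

Lemma hsemidist_setI {K1 K2 : set X} {eps : R} :
  compact K1 -> closed K2 -> 0 < eps ->
  exists2 d, 0 < d & forall B : set X,
    (hsemidist B K1 <= d%:E)%E -> (hsemidist B K2 <= d%:E)%E ->
    (hsemidist B (K1 `&` K2) <= eps%:E)%E.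
Proof.
move=> cK1 clK2 eps0.
have [d d0 near12] := near_setI cK1 clK2 (divr_gt0 eps0 (ltr0n _ 2)).
pose d' := Num.min d eps / 4.
have [md me] : Num.min d eps <= d /\ Num.min d eps <= eps by rewrite !ge_min !lexx orbT.
have d'0 : 0 < d' by rewrite divr_gt0 // lt_min d0 eps0.
exists d' => // B BK1 BK2; apply: hsemidist_le => x Bx.
have dd : d' < d' * 2 by lra.
have [a K1a xa] := hsemidist_le_lt BK1 dd Bx.
have [b K2b xb] := hsemidist_le_lt BK2 dd Bx.
have ab : mdist a b < d.
  apply: le_lt_trans (metric_triangle _ x _) _.
  by rewrite metric_sym; rewrite /d' in xa xb; lra.
have [k Kk ak] := near12 a b K1a K2b ab.
exists k => //; apply: le_trans (metric_triangle _ a _) _.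
by rewrite /d' in xa; lra.
Qed.

End HausdorffSemidistance.

Lemma uniformly_attracting_setI (R : realType) (X : metricType R) (S : Type)
    (U : S -> R -> R -> X -> X) (K1 K2 : set X) :
  compact K1 -> closed K2 ->
  uniformly_attracting U K1 -> uniformly_attracting U K2 ->
  uniformly_attracting U (K1 `&` K2).
Proof.
move=> cK1 clK2 A1 A2 C bC eps eps0.
have [d d0 dK12] := hsemidist_setI cK1 clK2 eps0.
have [T1 T1K1] := A1 C bC d d0.
have [T2 T2K2] := A2 C bC d d0.
exists (Num.max T1 T2) => t tau taut T12; apply: ge_ereal_sup => _ [sigma _ <-].
have [T1t T2t] : T1 <= t - tau /\ T2 <= t - tau by move: T12; rewrite ge_max => /andP.
apply: dK12.
- by apply: le_trans (T1K1 t tau taut T1t); apply: ereal_sup_ubound; exists sigma.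
- by apply: le_trans (T2K2 t tau taut T2t); apply: ereal_sup_ubound; exists sigma.
Qed.

Theorem corollary2p8 (R : realType) (X : metricType R) (Sigma : metricType R)
  (U : Sigma -> R -> R -> X -> X) (K1 K2 : set X) :
  (forall sigma, is_process (U sigma)) ->
  compact K1 -> compact K2 ->
  uniformly_attracting U K1 -> uniformly_attracting U K2 ->
  compact (K1 `&` K2) /\ uniformly_attracting U (K1 `&` K2).
Proof.
move=> _ cK1 cK2 A1 A2.
have clK2 : closed K2 by apply: compact_closed => //; exact: metric_hausdorff.
split; first exact: compact_closedI.
exact: uniformly_attracting_setI.
Qed.
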